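(* Under the hypotheses of Theorem 5.2 (stated below), let $(u_n)_{n\in\mathbb N}$ and $(v_n)_{n\in\mathbb N}$ be two positive solutions with the same $x_0$ (so set $u_0=v_0=x_0$), and let $\varepsilon_n=u_n-v_n$ for $n\ge0$. Then $2|\varepsilon_n|\le|\varepsilon_{n+1}|+|\varepsilon_{n-1}|$ for all $n\in\mathbb N$. Hypotheses: $\ell_n>0$, $\sigma_{n,0}>0$, $\kappa_n\in\mathbb R$, $\sigma_{n,\pm1}\ge0$ for $n\in\mathbb N$; $\sigma_n=\max(\sigma_{n,-1},\sigma_{n,1})$; $\mathbb N=\mathbb N_a\cup\mathbb N_b$ disjointly with $2\sigma_n\le\sigma_{n,0}$ for $n\in\mathbb N_a$ and with $\sigma_n\le\sigma_{n,0}<2\sigma_n$ and $-2(\sigma_{n,0}-\sigma_n)\sqrt{\ell_n}\le\kappa_n\sqrt{2\sigma_n-\sigma_{n,0}}$ for $n\in\mathbb N_b$; and, if $1\in\mathbb N_b$, $-2(\sigma_{1,0}-\sigma_1)\sqrt{\ell_1}\le(\sigma_{1,-1}x_0+\kappa_1)\sqrt{2\sigma_1-\sigma_{1,0}}$.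
   Context: $\mathbb N=\{1,2,3,\dots\}$. A positive solution with given $x_0\in\mathbb R$ is a sequence $(x_n)_{n\in\mathbb N}$ of positive reals satisfying $\ell_n = x_n(\sigma_{n,1}x_{n+1}+\sigma_{n,0}x_n+\sigma_{n,-1}x_{n-1})+\kappa_n x_n$ for all $n\in\mathbb N$. *)

From Stdlib Require Import Reals.
Open Scope R_scope.

(* Sequences are indexed by nat; index 0 holds the given value x_0, and the
   paper's N = {1,2,3,...} corresponds to indices n >= 1.
   l, s1, s0, sm1, k stand for l_n, sigma_{n,1}, sigma_{n,0}, sigma_{n,-1}, kappa_n
   (their values at index 0 are irrelevant). *)

Definition sigmaMax (s1 sm1 : nat -> R) (n : nat) : R := Rmax (sm1 n) (s1 n).

Definition positive_solution (l s1 s0 sm1 k : nat -> R) (x0 : R) (x : nat -> R) : Prop :=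
  x 0%nat = x0 /\
  (forall n : nat, (1 <= n)%nat -> 0 < x n) /\
  (forall n : nat, (1 <= n)%nat ->
     l n = x n * (s1 n * x (S n) + s0 n * x n + sm1 n * x (pred n)) + k n * x n).

From Stdlib Require Import Reals Lra Lia Psatz Classical.
Open Scope R_scope.

(* Write sigma = max(sigma_{n,-1}, sigma_{n,1}) and eps = u - v.
   Subtracting the three-term relations of u and v at index n, after
   multiplying them by v_n resp. u_n, gives the identity
     eps_n (s0_n u_n v_n + l_n) = - u_n v_n (s1_n eps_{n+1} + sm1_n eps_{n-1}),
   hence |eps_n| (s0_n u_n v_n + l_n) <= sigma u_n v_n (|eps_{n+1}| + |eps_{n-1}|).
   The claim 2|eps_n| <= |eps_{n+1}| + |eps_{n-1}| then follows from the key bound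
     (2 sigma - s0_n) u_n v_n <= l_n.
   For n in N_a the left side is <= 0.  For n in N_b we show (2 sigma - s0_n) x_n^2 <= l_n
   for every positive solution x: the relation yields s0_n x_n^2 + K x_n <= l_n with
   K = kappa_n (or sigma_{1,-1} x_0 + kappa_1 when n = 1), and the hypothesis on K turns
   this quadratic inequality into the bound; the geometric mean of the bounds for u and v
   gives the key bound. *)

(* Setting w = sqrt(c) x and S = sqrt(l), the
   hypotheses give (w - S)(s0 w + c S) <= 0, whence w <= S. *)
Lemma quadratic_square_bound (s0 sg K l x : R) :
  0 < l -> 0 < x -> sg <= s0 -> s0 < 2 * sg ->
  s0 * (x * x) + K * x <= l ->
  - 2 * (s0 - sg) * sqrt l <= K * sqrt (2 * sg - s0) ->
  (2 * sg - s0) * (x * x) <= l.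
Proof.
  intros hl hx hsg hs0 hq hK.
  set (c := 2 * sg - s0) in *.
  assert (hc : 0 < c) by (unfold c; lra).
  set (S := sqrt l) in *. set (T := sqrt c) in *.
  assert (hS2 : S * S = l) by (apply sqrt_sqrt; lra).
  assert (hT2 : T * T = c) by (apply sqrt_sqrt; lra).
  assert (hS : 0 < S) by (apply sqrt_lt_R0; lra).
  assert (hT : 0 < T) by (apply sqrt_lt_R0; lra).
  set (w := T * x).
  assert (hw : 0 < w) by (unfold w; nra).
  assert (scaled : s0 * (w * w) + (K * T) * w <= c * (S * S)).
  { replace (s0 * (w * w) + (K * T) * w) with (c * (s0 * (x * x) + K * x))
      by (unfold w; rewrite <- hT2; ring).
    rewrite hS2. apply Rmult_le_compat_l; lra. }
  assert (factored : (w - S) * (s0 * w + c * S) <= 0).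
  { replace ((w - S) * (s0 * w + c * S))
      with (s0 * (w * w) - 2 * (s0 - sg) * S * w - c * (S * S)) by (unfold c; ring).
    nra. }
  assert (hlin : 0 < s0 * w + c * S) by nra.
  assert (hwS : w - S <= 0).
  { apply Rmult_le_reg_r with (s0 * w + c * S); [exact hlin | lra]. }
  replace ((c * (x * x))) with (w * w) by (unfold w; rewrite <- hT2; ring).
  rewrite <- hS2. nra.
Qed.

Lemma weighted_product_bound (c a b l : R) :
  0 < c -> 0 < a -> 0 < b -> 0 < l ->
  c * (a * a) <= l -> c * (b * b) <= l -> c * (a * b) <= l.
Proof.
  intros hc ha hb hl hA hB.
  assert (hsq : (c * (a * b)) * (c * (a * b)) <= l * l).
  { replace ((c * (a * b)) * (c * (a * b))) with ((c * (a * a)) * (c * (b * b))) by ring.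
    apply Rmult_le_compat; nra. }
  nra.
Qed.

(* The three-term relation of a positive solution at n, with the (nonnegative)
   forward term dropped: the backward term is kept since x_0 need not be positive. *)
Lemma solution_energy_bound (l s1 s0 sm1 k : nat -> R) (x0 : R) (x : nat -> R) (n : nat) :
  positive_solution l s1 s0 sm1 k x0 x -> (1 <= n)%nat -> 0 <= s1 n ->
  s0 n * (x n * x n) + (sm1 n * x (pred n) + k n) * x n <= l n.
Proof.
  intros [_ [hpos heq]] hn hs1.
  pose proof (hpos n hn). pose proof (hpos (S n) ltac:(lia)).
  assert (0 <= s1 n * x (S n) * x n) by (apply Rmult_le_pos; [apply Rmult_le_pos|]; lra).
  rewrite (heq n hn). nra.
Qed.

(* For n = 1 the backward term involves the given x_0 and is absorbed in K; for n >= 2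
   it is nonnegative and dropped. *)
Lemma solution_square_bound (l s1 s0 sm1 k : nat -> R) (x0 sg : R) (x : nat -> R) (n : nat) :
  positive_solution l s1 s0 sm1 k x0 x -> (1 <= n)%nat ->
  0 < l n -> 0 <= s1 n -> 0 <= sm1 n -> sg <= s0 n -> s0 n < 2 * sg ->
  - 2 * (s0 n - sg) * sqrt (l n) <= k n * sqrt (2 * sg - s0 n) ->
  (n = 1%nat ->
   - 2 * (s0 n - sg) * sqrt (l n) <= (sm1 n * x0 + k n) * sqrt (2 * sg - s0 n)) ->
  (2 * sg - s0 n) * (x n * x n) <= l n.
Proof.
  intros hx hn hl hs1 hsm1 hsg hs0 hk hk1.
  pose proof (solution_energy_bound l s1 s0 sm1 k x0 x n hx hn hs1) as energy.
  destruct hx as [hx0 [hpos _]].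
  pose proof (hpos n hn) as hxn.
  destruct (Nat.eq_dec n 1) as [-> | hn2].
  - simpl in energy. rewrite hx0 in energy.
    exact (quadratic_square_bound _ _ _ _ _ hl hxn hsg hs0 energy (hk1 eq_refl)).
  - assert (hback : 0 <= sm1 n * x (pred n) * x n).
    { pose proof (hpos (pred n) ltac:(lia)).
      apply Rmult_le_pos; [apply Rmult_le_pos|]; lra. }
    apply (quadratic_square_bound (s0 n) sg (k n)); try assumption. nra.
Qed.

Lemma solution_difference_identity (l s1 s0 sm1 k : nat -> R) (x0 : R) (u v : nat -> R) (n : nat) :
  positive_solution l s1 s0 sm1 k x0 u -> positive_solution l s1 s0 sm1 k x0 v ->
  (1 <= n)%nat ->
  (u n - v n) * (s0 n * (u n * v n) + l n)
  = - (u n * v n) * (s1 n * (u (S n) - v (S n)) + sm1 n * (u (pred n) - v (pred n))).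
Proof.
  intros [_ [_ hu]] [_ [_ hv]] hn.
  pose proof (hu n hn) as Eu. pose proof (hv n hn) as Ev.
  transitivity ((u n - v n) * (s0 n * (u n * v n)) + u n * l n - v n * l n); [ring|].
  rewrite Ev at 1. rewrite Eu. ring.
Qed.

Lemma three_term_convexity (e ep em p s0 s1 sm1 sg l : R) :
  0 < p -> 0 <= s1 <= sg -> 0 <= sm1 <= sg -> 0 < s0 * p + l ->
  (2 * sg - s0) * p <= l ->
  e * (s0 * p + l) = - p * (s1 * ep + sm1 * em) ->
  2 * Rabs e <= Rabs ep + Rabs em.
Proof.
  intros hp hs1 hsm1 hpos hkey hid.
  assert (habs : Rabs e * (s0 * p + l) <= p * (s1 * Rabs ep + sm1 * Rabs em)).
  { rewrite <- (Rabs_right (s0 * p + l)) by lra.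
    rewrite <- Rabs_mult, hid, Rabs_mult, Rabs_Ropp, Rabs_right by lra.
    apply Rmult_le_compat_l; [lra|].
    eapply Rle_trans; [apply Rabs_triang|].
    rewrite !Rabs_mult, (Rabs_right s1), (Rabs_right sm1) by lra. lra. }
  pose proof (Rabs_pos e). pose proof (Rabs_pos ep). pose proof (Rabs_pos em).
  assert (hsum : s1 * Rabs ep + sm1 * Rabs em <= sg * (Rabs ep + Rabs em)) by nra.
  destruct (Rle_lt_dec sg 0) as [hsg | hsg].
  - assert (s1 = 0) by lra. assert (sm1 = 0) by lra. subst s1 sm1.
    assert (Rabs e * (s0 * p + l) <= 0 * (s0 * p + l)) by lra.
    assert (Rabs e <= 0) by (apply Rmult_le_reg_r with (s0 * p + l); lra).
    lra.
  - assert (2 * sg * p * Rabs e <= sg * p * (Rabs ep + Rabs em)) by nra.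
    apply Rmult_le_reg_l with (sg * p); [nra | lra].
Qed.

Theorem mainTheorem5
  (l s1 s0 sm1 k : nat -> R) (x0 : R) (inB : nat -> Prop)
  (hl : forall n : nat, (1 <= n)%nat -> 0 < l n)
  (hs0 : forall n : nat, (1 <= n)%nat -> 0 < s0 n)
  (hs1 : forall n : nat, (1 <= n)%nat -> 0 <= s1 n)
  (hsm1 : forall n : nat, (1 <= n)%nat -> 0 <= sm1 n)
  (hA : forall n : nat, (1 <= n)%nat -> ~ inB n -> 2 * sigmaMax s1 sm1 n <= s0 n)
  (hB : forall n : nat, (1 <= n)%nat -> inB n ->
        sigmaMax s1 sm1 n <= s0 n /\ s0 n < 2 * sigmaMax s1 sm1 n /\
        - 2 * (s0 n - sigmaMax s1 sm1 n) * sqrt (l n)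
          <= k n * sqrt (2 * sigmaMax s1 sm1 n - s0 n))
  (hB1 : inB 1%nat ->
        - 2 * (s0 1%nat - sigmaMax s1 sm1 1%nat) * sqrt (l 1%nat)
          <= (sm1 1%nat * x0 + k 1%nat) * sqrt (2 * sigmaMax s1 sm1 1%nat - s0 1%nat))
  (u v : nat -> R)
  (hu : positive_solution l s1 s0 sm1 k x0 u)
  (hv : positive_solution l s1 s0 sm1 k x0 v) :
  forall n : nat, (1 <= n)%nat ->
    2 * Rabs (u n - v n) <= Rabs (u (S n) - v (S n)) + Rabs (u (pred n) - v (pred n)).
Proof.
  intros n hn.
  set (sg := sigmaMax s1 sm1 n).
  pose proof (hl n hn) as hln. pose proof (hs0 n hn) as hs0n.
  pose proof (hs1 n hn) as hs1n. pose proof (hsm1 n hn) as hsm1n.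
  pose proof (proj1 (proj2 hu) n hn) as hun. pose proof (proj1 (proj2 hv) n hn) as hvn.
  assert (hp : 0 < u n * v n) by (apply Rmult_lt_0_compat; assumption).
  assert (key : (2 * sg - s0 n) * (u n * v n) <= l n).
  { destruct (classic (inB n)) as [hb | ha].
    - destruct (hB n hn hb) as [hsg [hs0sg hk]]. fold sg in hsg, hs0sg, hk.
      assert (hk1 : n = 1%nat -> - 2 * (s0 n - sg) * sqrt (l n)
                                 <= (sm1 n * x0 + k n) * sqrt (2 * sg - s0 n))
        by (intros ->; exact (hB1 hb)).
      apply weighted_product_bound; try assumption; try lra.
      + exact (solution_square_bound l s1 s0 sm1 k x0 sg u n hu hn hln hs1n hsm1n
                 hsg hs0sg hk hk1).
      + exact (solution_square_bound l s1 s0 sm1 k x0 sg v n hv hn hln hs1n hsm1n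
                 hsg hs0sg hk hk1).
    - assert (hsg : 2 * sg <= s0 n) by exact (hA n hn ha). nra. }
  assert (hpos : 0 < s0 n * (u n * v n) + l n).
  { pose proof (Rmult_lt_0_compat _ _ hs0n hp). lra. }
  apply (three_term_convexity _ _ _ (u n * v n) (s0 n) (s1 n) (sm1 n) sg (l n) hp).
  - split; [assumption | apply Rmax_r].
  - split; [assumption | apply Rmax_l].
  - exact hpos.
  - exact key.
  - exact (solution_difference_identity l s1 s0 sm1 k x0 u v n hu hv hn).
Qed.
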